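(* Let $z\in\mathbb{R}^n$, $\lambda_1,\lambda_2>0$, $l\le 0\le u$ in $\mathbb{R}^n$, and for $i\in[n]$ let $\omega_i(\alpha)=\lambda_2|\alpha|_0+\delta_{[l_i,u_i]}(\alpha)$ for $\alpha\in\mathbb{R}$. Set $H(0)=-\lambda_1$ and, for $s\in[n]$, $$h_s(y;z_{1:s})=\tfrac12\|y-z_{1:s}\|^2+\lambda_1\sum_{j=1}^{s-1}|y_j-y_{j+1}|_0+\sum_{j=1}^s\omega_j(y_j)\ (y\in\mathbb{R}^s),\qquad H(s)=\min_{y\in\mathbb{R}^s}h_s(y;z_{1:s}),$$ and define $P_s:[0\!:\!s-1]\times\mathbb{R}\to(-\infty,+\infty]$ by $$P_s(i,\alpha)=H(i)+\tfrac12\|\alpha\mathbf{1}-z_{i+1:s}\|^2+\sum_{j=i+1}^s\omega_j(\alpha)+\lambda_1.$$ Fix any $s\in[n]$. Then: (i) $H(s)=\min_{i\in[0:s-1],\ \alpha\in\mathbb{R}}P_s(i,\alpha)$; (ii) if $(i_s^*,\alpha_s^* )\in\arg\min_{i\in[0:s-1],\alpha\in\mathbb{R}}P_s(i,\alpha)$, then $y^*=(y^*_{1:i_s^*};\alpha_s^*\mathbf{1})$ is a global minimizer of $\min_{y\in\mathbb{R}^s}h_s(y;z_{1:s})$, where $y^*_{1:i_s^*}\in\arg\min_{v\in\mathbb{R}^{i_s^*}}h_{i_s^*}(v;z_{1:i_s^*})$ (when $i_s^*=0$, $y^*=\alpha_s^*\mathbf{1}$).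
   Context: $|t|_0=0$ if $t=0$ and $1$ otherwise; $\delta_{[a,b]}$ is the indicator of the interval $[a,b]$. $[n]=\{1,\dots,n\}$, $[j\!:\!k]=\{j,\dots,k\}$, $z_{j:k}=(z_j,\dots,z_k)$, and $\mathbf{1}$ is the all-ones vector of the appropriate dimension. In this context $\sum_{j=1}^{s-1}|y_j-y_{j+1}|_0$ is $\|\widehat{B}y\|_0$ for the fused difference operator $\widehat B y=(y_1-y_2,\dots,y_{s-1}-y_s)$, so $H(n)$ is the optimal value of $\min_x \frac12\|x-z\|^2+\lambda_1\|\widehat Bx\|_0+\lambda_2\|x\|_0+\delta_{\{l\le x\le u\}}(x)$. *)

From HB Require Import structures.
From mathcomp Require Import all_boot all_order all_algebra.
From mathcomp Require Import all_classical all_reals.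
From mathcomp Require Import ereal.

Set Implicit Arguments. Unset Strict Implicit. Unset Printing Implicit Defensive.
Import Order.TTheory GRing.Theory Num.Theory.
Local Open Scope ring_scope.
Local Open Scope ereal_scope.

Section Defs.
Variable R : realType.

(* 1-based entry j (1 <= j <= s) of a vector y in R^s = 'rV[R]_s. *)
Definition ent (s : nat) (y : 'rV[R]_s) (j : nat) : R :=
  oapp (fun k : 'I_s => y ord0 k) 0%R (insub j.-1).

Definition l0 (t : R) : R := if t == 0%R then 0%R else 1%R.

Definition delta_int (a b x : R) : \bar R := if (a <= x <= b)%R then 0 else +oo.

(* omega_j(alpha) = lambda2 |alpha|_0 + delta_[l_j,u_j](alpha); vectors z l u are
   given 1-based as functions nat -> R (only indices 1..n are meaningful). *)
Definition omega (l u : nat -> R) (lam2 : R) (j : nat) (a : R) : \bar R :=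
  (lam2 * l0 a)%:E + delta_int (l j) (u j) a.

Definition hs (z l u : nat -> R) (lam1 lam2 : R) (s : nat) (y : 'rV[R]_s) : \bar R :=
  ((2%:R^-1 * \sum_(1 <= j < s.+1) (ent y j - z j) ^+ 2)
   + lam1 * \sum_(1 <= j < s) l0 (ent y j - ent y j.+1))%:E
  + \sum_(1 <= j < s.+1) omega l u lam2 j (ent y j).

(* H(0) = -lambda1 ; H(s) = min_y h_s(y) (taken as the infimum, s >= 1). *)
Definition Hs (z l u : nat -> R) (lam1 lam2 : R) (s : nat) : \bar R :=
  if s is 0 then (- lam1)%:E
  else ereal_inf (range (hs z l u lam1 lam2 (s := s))).

Definition Ps (z l u : nat -> R) (lam1 lam2 : R) (s i : nat) (a : R) : \bar R :=
  Hs z l u lam1 lam2 i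
  + (2%:R^-1 * \sum_(i.+1 <= j < s.+1) (a - z j) ^+ 2)%:E
  + \sum_(i.+1 <= j < s.+1) omega l u lam2 j a
  + lam1%:E.

Definition concat_const (i s : nat) (v : 'rV[R]_i) (a : R) : 'rV[R]_s :=
  \row_(k < s) (if (k < i)%N then ent v k.+1 else a).

End Defs.

From HB Require Import structures.
From mathcomp Require Import all_boot all_order all_algebra.
From mathcomp Require Import all_classical all_reals.
From mathcomp Require Import ereal.
From mathcomp Require Import zify ring lra.

Set Implicit Arguments.
Unset Strict Implicit.
Unset Printing Implicit Defensive.

Import Order.TTheory GRing.Theory Num.Theory.
Local Open Scope ring_scope.
Local Open Scope ereal_scope.

(* Cut y in R^s at the start i of its last constant block: h_s(y) is h_i of the prefix
   plus the jump penalty lam1 plus the cost of the constant block, so P_s(i, y_s) <= h_s(y)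
   (for i = 0 there is no jump, which H(0) = -lam1 accounts for).  Conversely, appending
   a constant block to a minimizer of h_i costs at most P_s(i, alpha).  For fixed i the
   block cost attains its minimum: away from 0 the |.|_0 penalty is constant and the
   quadratic part is minimised on the feasible interval by the clamped mean.  By
   induction on s every h_s thus has a minimizer built from an argmin of P_s, and both
   claims follow. *)

Definition clamp (R : realDomainType) (lo hi x : R) : R := Num.max lo (Num.min hi x).

Lemma clamp_itv (R : realDomainType) (lo hi x : R) :
  (lo <= hi)%R -> (lo <= clamp lo hi x <= hi)%R.
Proof. by move=> lohi; rewrite /clamp le_max lexx ge_max lohi ge_min lexx. Qed.

Lemma sqr_le_sqr (R : realDomainType) (p q : R) : (0 <= p <= q -> p ^+ 2 <= q ^+ 2)%R.
Proof.
move=> /andP[p0 pq]; rewrite -subr_ge0 (_ : q ^+ 2 - p ^+ 2 = (q - p) * (q + p))%R; last by ring.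
by apply: mulr_ge0; lra.
Qed.

Lemma clamp_nearest (R : realDomainType) (lo hi m a : R) :
  (lo <= a <= hi)%R -> ((clamp lo hi m - m) ^+ 2 <= (a - m) ^+ 2)%R.
Proof.
move=> /andP[loa ahi]; rewrite /clamp.
have [him|mhi] := leP hi m.
  rewrite (max_r (le_trans loa ahi)) -sqrrN -[X in (_ <= X)%R]sqrrN.
  by apply: sqr_le_sqr; lra.
have [lom|mlo] := leP lo m; first by rewrite subrr expr2 mulr0 sqr_ge0.
by apply: sqr_le_sqr; lra.
Qed.

Definition mean (R : realFieldType) (I : Type) (r : seq I) (x : I -> R) : R :=
  (\sum_(i <- r) x i) / (size r)%:R.

Lemma mulr_mean (R : realFieldType) (I : Type) (r : seq I) (x : I -> R) :
  ((size r)%:R * mean r x = \sum_(i <- r) x i)%R.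
Proof.
case: r => [|i r]; first by rewrite big_nil mul0r.
by rewrite mulrC divfK // pnatr_eq0.
Qed.

Lemma sum_sqr_subB (R : realFieldType) (I : Type) (r : seq I) (x : I -> R) (a b : R) :
  (\sum_(i <- r) (a - x i) ^+ 2 - \sum_(i <- r) (b - x i) ^+ 2
   = (size r)%:R * ((a - mean r x) ^+ 2 - (b - mean r x) ^+ 2))%R.
Proof.
have -> : (\sum_(i <- r) (a - x i) ^+ 2 - \sum_(i <- r) (b - x i) ^+ 2
    = \sum_(i <- r) ((a - b) * (a + b)) - 2 * (a - b) * \sum_(i <- r) x i)%R.
  by rewrite -sumrB mulr_sumr -sumrB; apply: eq_bigr => i _; ring.
by rewrite big_const_seq count_predT iter_addr_0 -(mulr_mean r x) -mulr_natl; ring.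
Qed.

Lemma finite_argmin (T : Type) (d : Order.disp_t) (V : orderType d) (F : nat -> T -> V) s :
  (0 < s)%N -> (forall i, (i < s)%N -> exists a, forall a', (F i a <= F i a')%O) ->
  exists i a, (i < s)%N /\ forall i' a', (i' < s)%N -> (F i a <= F i' a')%O.
Proof.
case: s => // s _; elim: s => [|s IH] Fmin.
  have [a amin] := Fmin 0%N isT.
  by exists 0%N, a; split => // i' a'; rewrite ltnS leqn0 => /eqP ->.
have [i [a [lt_is imin]]] := IH (fun i lt_is => Fmin i (leqW lt_is)).
have [b bmin] := Fmin s.+1 (ltnSn _).
have [le_ab|lt_ba] := leP (F i a) (F s.+1 b).
  exists i, a; split; first exact: leqW.
  move=> i' a'; rewrite ltnS leq_eqVlt => /predU1P[->|/imin//].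
  exact: le_trans le_ab (bmin a').
exists s.+1, b; split => // i' a'; rewrite ltnS leq_eqVlt => /predU1P[->//|lt_i's].
exact: le_trans (ltW lt_ba) (imin _ _ lt_i's).
Qed.

Lemma last_block (T : eqType) (f : nat -> T) s : (0 < s)%N ->
  exists i, [/\ (i < s)%N, i = 0%N \/ f i != f s & forall j, (i < j <= s)%N -> f j = f s].
Proof.
move=> s_gt0; pose P i := (i < s)%N && ((i == 0)%N || (f i != f s)).
have exP : exists i, P i by exists 0%N; rewrite /P s_gt0.
have ubP i : P i -> (i <= s)%N by case/andP => /ltnW.
case: (ex_maxnP exP ubP) => i /andP[lt_is i0_or_jump] imax.
exists i; split => //; first by case/orP: i0_or_jump => [/eqP|]; [left|right].
move=> j /andP[lt_ij le_js]; apply/eqP; apply: contraTT lt_ij => jump.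
have lt_js : (j < s)%N by rewrite ltn_neqAle le_js andbT; apply: contraNneq jump => ->.
by rewrite -leqNgt imax // /P lt_js jump orbT.
Qed.

Section SegmentCost.
Variables (R : realType) (z l u : nat -> R) (lam2 : R).

Lemma l0_0 : l0 (0 : R) = 0%R. Proof. by rewrite /l0 eqxx. Qed.
Lemma l0_neq0 (a : R) : a != 0%R -> l0 a = 1%R. Proof. by rewrite /l0 => /negPf ->. Qed.
Lemma l0_le1 (a : R) : (l0 a <= 1)%R. Proof. by rewrite /l0; case: ifP. Qed.

Definition seg_cost (r : seq nat) (a : R) : \bar R :=
  (2%:R^-1 * \sum_(j <- r) (a - z j) ^+ 2)%:E + \sum_(j <- r) omega l u lam2 j a.

Definition seg_feasible (r : seq nat) (a : R) : bool := all (fun j => l j <= a <= u j)%R r.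

Lemma sum_omega r a : \sum_(j <- r) omega l u lam2 j a =
  if seg_feasible r a then ((size r)%:R * (lam2 * l0 a))%:E else +oo.
Proof.
elim: r => [|j r IH]; first by rewrite big_nil /= mul0r.
rewrite big_cons IH /seg_feasible /= /omega /delta_int.
case: (l j <= a <= u j)%R; case: (all _ r) => /=; rewrite ?addey ?addye //.
by rewrite adde0 -EFinD -[(size r).+1]addn1 natrD; congr (_%:E); ring.
Qed.

(* The seeds [l (head 0 r)], [u (head 0 r)] belong to the families when r is nonempty. *)
Definition seg_lo (r : seq nat) : R := \big[Num.max/l (head 0%N r)]_(j <- r) l j.
Definition seg_hi (r : seq nat) : R := \big[Num.min/u (head 0%N r)]_(j <- r) u j.

Lemma seg_feasibleE r a : r != [::] -> seg_feasible r a = (seg_lo r <= a <= seg_hi r)%R.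
Proof.
move=> r_neq0; have head_r : head 0%N r \in r by case: r r_neq0 => // j r _; exact: mem_head.
apply/allP/andP => [feas|[loa ahi] j jr].
  have /andP[lh_le_a a_le_uh] := feas _ head_r.
  by split; rewrite /seg_lo /seg_hi big_seq;
    [apply: bigmax_le | apply: le_bigmin] => // j /feas /andP[].
by rewrite (le_trans (le_bigmax_seq _ _ _ _ jr isT) loa)
  (le_trans ahi (ge_bigmin_seq _ _ _ _ jr isT)).
Qed.

Variable r : seq nat.
Hypotheses (r_neq0 : r != [::]) (r_lu : forall j, j \in r -> (l j <= 0 <= u j)%R).
Hypothesis lam2_ge0 : (0 <= lam2)%R.

Definition seg_argmin : R := clamp (seg_lo r) (seg_hi r) (mean r z).

Lemma seg_cost_argmin_le a : a != 0%R -> seg_cost r seg_argmin <= seg_cost r a.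
Proof.
move=> a_neq0; have /andP[lo_le0 hi_ge0] : (seg_lo r <= 0 <= seg_hi r)%R.
  by rewrite -seg_feasibleE //; apply/allP.
rewrite /seg_cost !sum_omega !seg_feasibleE // clamp_itv; last exact: le_trans lo_le0 hi_ge0.
case: ifP => [a_itv|]; last by rewrite leey.
rewrite -!EFinD lee_fin (l0_neq0 a_neq0) mulr1; apply: lerD.
  rewrite ler_wpM2l ?invr_ge0 ?ler0n // -subr_ge0 sum_sqr_subB.
  by rewrite mulr_ge0 ?ler0n // subr_ge0 clamp_nearest.
by rewrite ler_wpM2l ?ler0n // ler_piMr ?l0_le1.
Qed.

Lemma seg_cost_has_min : exists a0, forall a, seg_cost r a0 <= seg_cost r a.
Proof.
have [le0|lt0] := leP (seg_cost r 0) (seg_cost r seg_argmin).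
  exists 0%R => a; have [->//|a_neq0] := eqVneq a 0%R.
  exact: le_trans le0 (seg_cost_argmin_le a_neq0).
exists seg_argmin => a; have [->|a_neq0] := eqVneq a 0%R; first exact: ltW.
exact: seg_cost_argmin_le.
Qed.

End SegmentCost.

Section DynamicProgramming.
Variables (R : realType) (z l u : nat -> R) (lam1 lam2 : R).

Definition chain_cost (s : nat) (f : nat -> R) : \bar R :=
  ((2%:R^-1 * \sum_(1 <= j < s.+1) (f j - z j) ^+ 2)
   + lam1 * \sum_(1 <= j < s) l0 (f j - f j.+1))%:E
  + \sum_(1 <= j < s.+1) omega l u lam2 j (f j).

Lemma hsE s (y : 'rV[R]_s) : hs z l u lam1 lam2 y = chain_cost s (ent y).
Proof. by []. Qed.

Lemma ent_row s (F : nat -> R) j : (0 < j <= s)%N -> ent (\row_(k < s) F k) j = F j.-1.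
Proof. by case: j => // j /= lt_js; rewrite /ent insubT /= mxE. Qed.

Lemma ent_concat_const i s (v : 'rV[R]_i) a j : (0 < j <= s)%N ->
  ent (concat_const s v a) j = if (j <= i)%N then ent v j else a.
Proof.
move=> j_itv; rewrite (ent_row (fun k => if (k < i)%N then ent v k.+1 else a)) //.
by case: j j_itv.
Qed.

Lemma eq_chain_cost s f g : (forall j, (0 < j <= s)%N -> f j = g j) ->
  chain_cost s f = chain_cost s g.
Proof.
move=> fg; rewrite /chain_cost; congr ((_ * _ + _ * _)%:E + _).
all: apply: eq_big_nat => j /andP[j_gt0 lt_js]; rewrite !fg //; lia.
Qed.

Lemma chain_cost_const s f a : (forall j, (0 < j <= s)%N -> f j = a) ->
  chain_cost s f = seg_cost z l u lam2 (index_iota 1 s.+1) a.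
Proof.
move=> fa; rewrite (eq_chain_cost (g := fun=> a) fa) /chain_cost /=.
by rewrite subrr l0_0 big1_eq mulr0 addr0.
Qed.

Lemma sum_l0_const m s (f : nat -> R) a : (forall j, (m <= j <= s)%N -> f j = a) ->
  (\sum_(m <= j < s) l0 (f j - f j.+1) = 0)%R.
Proof.
move=> fa; rewrite big1_seq // => j /andP[_]; rewrite mem_index_iota => j_itv.
by rewrite !fa ?subrr ?l0_0 //; lia.
Qed.

Lemma chain_cost_split s i f a : (0 < i < s)%N -> (forall j, (i < j <= s)%N -> f j = a) ->
  chain_cost s f
  = chain_cost i f + (lam1 * l0 (f i - a))%:E + seg_cost z l u lam2 (index_iota i.+1 s.+1) a.
Proof.
move=> /andP[i_gt0 lt_is] fa.
have sq : (\sum_(1 <= j < s.+1) (f j - z j) ^+ 2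
    = \sum_(1 <= j < i.+1) (f j - z j) ^+ 2 + \sum_(i.+1 <= j < s.+1) (a - z j) ^+ 2)%R.
  rewrite (big_cat_nat _ (n := i.+1)) ?ltnS ?(ltnW lt_is) //; congr (_ + _)%R.
  by apply: eq_big_nat => j j_itv; rewrite fa //; lia.
have jumps : (\sum_(1 <= j < s) l0 (f j - f j.+1)
    = \sum_(1 <= j < i) l0 (f j - f j.+1) + l0 (f i - a))%R.
  rewrite (big_cat_nat _ (n := i.+1)) // big_nat_recr // (@sum_l0_const i.+1 s f a).
    by rewrite /= addr0 (fa i.+1) // ltnSn.
  by move=> j j_itv; apply: fa; lia.
have om : \sum_(1 <= j < s.+1) omega l u lam2 j (f j)
    = \sum_(1 <= j < i.+1) omega l u lam2 j (f j) + \sum_(i.+1 <= j < s.+1) omega l u lam2 j a.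
  rewrite (big_cat_nat _ (n := i.+1)) ?ltnS ?(ltnW lt_is) //; congr (_ + _).
  by apply: eq_big_nat => j j_itv; rewrite fa //; lia.
by rewrite /chain_cost /seg_cost sq jumps om !mulrDr !EFinD !addeA [LHS](ACl (1*3*5*4*2*6)).
Qed.

Local Notation h := (@hs R z l u lam1 lam2 _).
Local Notation H := (Hs z l u lam1 lam2).
Local Notation P := (Ps z l u lam1 lam2).

Lemma Hs_le_hs s (y : 'rV[R]_s) : (0 < s)%N -> H s <= h y.
Proof. by case: s y => // s y _; apply: ereal_inf_lbound; exists y. Qed.

Lemma Hs_minimizer s (y : 'rV[R]_s) :
  (0 < s)%N -> (forall y' : 'rV[R]_s, h y <= h y') -> H s = h y.
Proof.
move=> s_gt0 ymin; apply/le_anti; rewrite Hs_le_hs //=.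
by case: s s_gt0 y ymin => // s _ y ymin; apply/ereal_infP => _ [y' _ <-].
Qed.

Lemma PsE s i a :
  P s i a = H i + seg_cost z l u lam2 (index_iota i.+1 s.+1) a + lam1%:E.
Proof. by rewrite /Ps /seg_cost addeA. Qed.

Lemma Ps0 s a : P s 0 a = seg_cost z l u lam2 (index_iota 1 s.+1) a.
Proof. by rewrite PsE /= addeAC -EFinD addNr add0e. Qed.

Lemma Ps_le_hs s (y : 'rV[R]_s) :
  (0 < s)%N -> exists2 i, (i < s)%N & P s i (ent y s) <= h y.
Proof.
move=> s_gt0; have [i [lt_is i0_or_jump tail]] := last_block (ent y) s_gt0.
exists i => //; case: (posnP i) => [i0|i_gt0].
  by subst i; rewrite Ps0 hsE (chain_cost_const tail).
have jump : ent y i != ent y s by case: i0_or_jump => // i0; rewrite i0 in i_gt0.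
rewrite hsE (chain_cost_split _ tail) ?i_gt0 // l0_neq0 ?subr_eq0 // mulr1 PsE.
have prefix : chain_cost i (ent y) = h (\row_(k < i) ent y k.+1).
  rewrite hsE; apply: eq_chain_cost => j j_itv.
  by rewrite (ent_row (fun k => ent y k.+1)) //; case: j j_itv.
rewrite prefix [leRHS]addeAC; do 2 apply: leeD2r; exact: Hs_le_hs.
Qed.

Hypothesis lam1_ge0 : (0 <= lam1)%R.

Lemma hs_concat_le_Ps s i (v : 'rV[R]_i) a :
  (i < s)%N -> (forall v' : 'rV[R]_i, h v <= h v') -> h (concat_const s v a) <= P s i a.
Proof.
move=> lt_is vmin; rewrite hsE.
case: (posnP i) v vmin lt_is => [-> | i_gt0] v vmin lt_is.
  rewrite Ps0 (chain_cost_const (a := a)) // => j j_itv.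
  by rewrite ent_concat_const //; case: j j_itv.
have tail j : (i < j <= s)%N -> ent (concat_const s v a) j = a.
  by move=> j_itv; rewrite ent_concat_const; [rewrite leqNgt (andP j_itv).1 | lia].
rewrite (chain_cost_split _ tail) ?i_gt0 // PsE (Hs_minimizer i_gt0 vmin) hsE.
rewrite (eq_chain_cost (g := ent v)) => [|j j_itv]; last first.
  by rewrite ent_concat_const ?(andP j_itv).2 //; lia.
rewrite [leRHS]addeAC; apply: leeD2r; apply: leeD2l.
by rewrite lee_fin ler_piMr ?l0_le1.
Qed.

Variable n : nat.
Hypothesis lam2_ge0 : (0 <= lam2)%R.
Hypothesis lu : forall j, (1 <= j <= n)%N -> (l j <= 0 <= u j)%R.

Lemma Ps_has_min s : (s <= n)%N -> (0 < s)%N ->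
  exists i a, (i < s)%N /\ forall i' a', (i' < s)%N -> P s i a <= P s i' a'.
Proof.
move=> le_sn s_gt0; apply: finite_argmin => // i lt_is.
have [|j|a amin] := @seg_cost_has_min _ z l u lam2 (index_iota i.+1 s.+1) _ _ lam2_ge0.
- by rewrite -size_eq0 size_iota subSS subn_eq0 -ltnNge.
- rewrite mem_index_iota => /andP[lt_ij lt_js]; apply: lu.
  by rewrite (leq_trans _ lt_ij) // -ltnS (leq_trans lt_js) // ltnS.
by exists a => a'; rewrite !PsE; apply: leeD2r; apply: leeD2l.
Qed.

Lemma hs_has_min s :
  (s <= n)%N -> exists y : 'rV[R]_s, forall y' : 'rV[R]_s, h y <= h y'.
Proof.
elim/ltn_ind: s => s IH le_sn; case: (posnP s) => [s0|s_gt0].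
  by subst s; exists 0%R => y'; rewrite (thinmx0 y').
have [i [a [lt_is Pmin]]] := Ps_has_min le_sn s_gt0.
have [v vmin] := IH i lt_is (ltnW (leq_trans lt_is le_sn)).
exists (concat_const s v a) => y; have [i' lt_i's le_y] := Ps_le_hs y s_gt0.
exact: le_trans (hs_concat_le_Ps a lt_is vmin) (le_trans (Pmin _ _ lt_i's) le_y).
Qed.

Lemma Hs_le_Ps s i a : (s <= n)%N -> (i < s)%N -> H s <= P s i a.
Proof.
move=> le_sn lt_is; have [v vmin] := hs_has_min (ltnW (leq_trans lt_is le_sn)).
have s_gt0 : (0 < s)%N := leq_ltn_trans (leq0n i) lt_is.
exact: le_trans (Hs_le_hs _ s_gt0) (hs_concat_le_Ps a lt_is vmin).
Qed.

End DynamicProgramming.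

Theorem lemma3p3 (R : realType) (n : nat) (z l u : nat -> R) (lam1 lam2 : R)
  (hlam1 : (0 < lam1)%R) (hlam2 : (0 < lam2)%R)
  (hlu : forall j : nat, (1 <= j <= n)%N -> (l j <= 0 <= u j)%R)
  (s : nat) (hs1 : (1 <= s <= n)%N) :
  ((exists (i : nat) (a : R), (i < s)%N /\ Ps z l u lam1 lam2 s i a = Hs z l u lam1 lam2 s)
   /\ (forall (i : nat) (a : R), (i < s)%N -> Hs z l u lam1 lam2 s <= Ps z l u lam1 lam2 s i a))
  /\
  (forall (i : nat) (a : R), (i < s)%N ->
     (forall (i' : nat) (a' : R), (i' < s)%N -> Ps z l u lam1 lam2 s i a <= Ps z l u lam1 lam2 s i' a') ->
     forall v : 'rV[R]_i, (forall v' : 'rV[R]_i, hs z l u lam1 lam2 v <= hs z l u lam1 lam2 v') ->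
     forall y : 'rV[R]_s,
       hs z l u lam1 lam2 (concat_const s v a) <= hs z l u lam1 lam2 y).
Proof.
have [lam1_ge0 lam2_ge0] := (ltW hlam1, ltW hlam2).
case/andP: hs1 => s_gt0 le_sn.
have Hs_le_Ps_s i a : (i < s)%N -> Hs z l u lam1 lam2 s <= Ps z l u lam1 lam2 s i a.
  by move=> lt_is; exact (Hs_le_Ps z lam1_ge0 lam2_ge0 hlu a le_sn lt_is).
have Ps_le_hs_s (y : 'rV[R]_s) := Ps_le_hs z l u lam1 lam2 y s_gt0.
split; first split=> //.
  have [i [a [lt_is Pmin]]] := Ps_has_min z lam1 lam2_ge0 hlu le_sn s_gt0.
  exists i, a; split => //; apply/le_anti; rewrite Hs_le_Ps_s // andbT.
  have [y ymin] := hs_has_min z lam1_ge0 lam2_ge0 hlu le_sn.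
  rewrite (Hs_minimizer s_gt0 ymin); have [i' lt_i's le_y] := Ps_le_hs_s y.
  exact: le_trans (Pmin _ _ lt_i's) le_y.
move=> i a lt_is Pmin v vmin y; have [i' lt_i's le_y] := Ps_le_hs_s y.
exact: le_trans (hs_concat_le_Ps lam1_ge0 a lt_is vmin) (le_trans (Pmin _ _ lt_i's) le_y).
Qed.
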